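(* Let $\boldsymbol{y}_1,\boldsymbol{y}_2,\boldsymbol{\lambda}_1,\boldsymbol{\lambda}_2\in\mathbb{R}^p$, where $\{\lambda_{1,i}\}_{1\le i\le p}$ and $\{\lambda_{2,i}\}_{1\le i\le p}$ are non-negative non-decreasing sequences. Then \[ \|\mathrm{Prox}_{\boldsymbol{\lambda}_1}(\boldsymbol{y}_1)-\mathrm{Prox}_{\boldsymbol{\lambda}_2}(\boldsymbol{y}_2)\|_2\le2\big(\|\boldsymbol{\lambda}_1-\boldsymbol{\lambda}_2\|_2+\|\boldsymbol{y}_1-\boldsymbol{y}_2\|_2\big). \]
   Context: For $\boldsymbol y\in\mathbb{R}^p$ and $0\le\lambda_1\le\cdots\le\lambda_p$, $\mathrm{Prox}_{\boldsymbol{\lambda}}(\boldsymbol{y})=\arg\min_{\boldsymbol{x}\in\mathbb{R}^p}\frac12\|\boldsymbol{y}-\boldsymbol{x}\|_2^2+\sum_{i=1}^p\lambda_i|x|_{(i)}$, where $|x|_{(1)}\le\cdots\le|x|_{(p)}$ is the increasing rearrangement of $|x_1|,\dots,|x_p|$. *)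

From mathcomp Require Import all_boot all_order all_algebra.
From mathcomp Require Import reals.
Set Implicit Arguments. Unset Strict Implicit. Unset Printing Implicit Defensive.
Import Order.TTheory GRing.Theory Num.Theory.
Local Open Scope ring_scope.

Definition norm2 (R : realType) (p : nat) (v : 'rV[R]_p) : R :=
  Num.sqrt (\sum_(i < p) v 0 i ^+ 2).

(* |x|_(1) <= ... <= |x|_(p): increasing rearrangement of |x_1|,...,|x_p|,
   as a sequence indexed from 0. *)
Definition abs_sorted (R : realType) (p : nat) (x : 'rV[R]_p) : seq R :=
  sort <=%R [seq `|x 0 i| | i <- enum 'I_p].

Definition sl1 (R : realType) (p : nat) (lam x : 'rV[R]_p) : R :=
  \sum_(i < p) lam 0 i * nth 0 (abs_sorted x) i.

Definition prox_obj (R : realType) (p : nat) (lam y x : 'rV[R]_p) : R :=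
  2^-1 * norm2 (y - x) ^+ 2 + sl1 lam x.

(* x = Prox_lambda(y): x is a minimizer of the objective (the minimizer
   exists and is unique by strong convexity). *)
Definition is_prox (R : realType) (p : nat) (lam y x : 'rV[R]_p) : Prop :=
  forall z : 'rV[R]_p, prox_obj lam y x <= prox_obj lam y z.

Definition admissible_lambda (R : realType) (p : nat) (lam : 'rV[R]_p) : Prop :=
  (forall i : 'I_p, 0 <= lam 0 i) /\
  (forall i j : 'I_p, (i <= j)%N -> lam 0 i <= lam 0 j).

From mathcomp Require Import all_boot all_order all_algebra.
From mathcomp Require Import reals ring lra zify.
Import Order.TTheory GRing.Theory Num.Theory.
Local Open Scope ring_scope.

(* Write J(x) = sum_i lam_i |x|_(i).  Minimality of x = Prox(y) along the
   segment towards any z, together with convexity of J, gives the variational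
   inequality <y - x, z - x> <= J(z) - J(x).  Adding it for (lam1, y1, x1) at
   z = x2 and for (lam2, y2, x2) at z = x1, and using that J(x) is linear in lam,
   yields |x1 - x2|^2 <= <y1 - y2, x1 - x2> + <lam1 - lam2, s(x2) - s(x1)>,
   where s(x) is the nondecreasing rearrangement of |x|.  Since s is
   1-Lipschitz, two AM-GM estimates give |x1 - x2|^2 <= 2 (|lam1 - lam2|^2 +
   |y1 - y2|^2).  Both the convexity of J and the Lipschitz bound on s come from
   the rearrangement inequality: against nondecreasing weights, the sorted
   arrangement of a sequence maximizes the weighted sum. *)

Lemma ge0_of_quadratic_ge0 (R : realFieldType) (a b : R) :
  (forall t, 0 < t <= 1 -> 0 <= t * a + t ^+ 2 * b) -> 0 <= a.
Proof.
move=> quad_ge0; rewrite leNgt; apply/negP => a_lt0.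
have b_le := ler_norm b; have b_ge0 := normr_ge0 b.
have D_gt0 : 0 < `|b| - a by lra.
(* This [t] makes [a + t |b| = t a], so [t a + t^2 b <= t^2 a < 0]. *)
pose t := - a / (`|b| - a).
have t_gt0 : 0 < t by rewrite divr_gt0 // oppr_gt0.
have tD : t * (`|b| - a) = - a by rewrite divfK // gt_eqF.
have t_le1 : t <= 1 by rewrite ler_pdivrMr // mul1r; lra.
have := quad_ge0 t; rewrite t_gt0 t_le1 => /(_ isT).
have na_gt0 : 0 < - a by rewrite oppr_gt0.
have := mulr_gt0 (mulr_gt0 t_gt0 t_gt0) na_gt0.
nra.
Qed.

Section SeqDot.
Set Implicit Arguments.
Unset Strict Implicit.
Variable R : realDomainType.
Implicit Types (a b : seq R) (c m : R).

Fixpoint dotseq a b : R :=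
  match a, b with x :: a', y :: b' => x * y + dotseq a' b' | _, _ => 0 end.

Lemma dotseq_cat a1 a2 b1 b2 :
  size a1 = size b1 -> dotseq (a1 ++ a2) (b1 ++ b2) = dotseq a1 b1 + dotseq a2 b2.
Proof.
elim: a1 b1 => [|x a1 IH] [|y b1] //=; first by rewrite add0r.
by move=> [/IH ->]; rewrite addrA.
Qed.

Lemma dotseq_sum n a b :
  size a = n -> size b = n -> dotseq a b = \sum_(i < n) a`_i * b`_i.
Proof.
elim: n a b => [|n IH] [|x a] [|y b] //=; first by rewrite big_ord0.
by move=> [/IH IHa] [/IHa ->]; rewrite big_ord_recl.
Qed.

Lemma dotseq_map (I : Type) (s : seq I) (f g : I -> R) :
  dotseq (map f s) (map g s) = \sum_(i <- s) f i * g i.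
Proof. by elim: s => [|i s IH] /=; rewrite ?big_nil ?big_cons ?IH. Qed.

Lemma ler_dotseq_map a (I : Type) (s : seq I) (f g : I -> R) :
  all (fun v => 0 <= v) a -> (forall i, f i <= g i) ->
  dotseq a (map f s) <= dotseq a (map g s).
Proof.
move=> + fg; elim: s a => [|i s IH] [|x a] //= /andP[x_ge0 a_ge0].
by rewrite lerD ?ler_wpM2l ?IH.
Qed.

Lemma dotseq_map_comb a (I : Type) (s : seq I) (f g : I -> R) u v :
  dotseq a (map (fun i => u * f i + v * g i) s) =
  u * dotseq a (map f s) + v * dotseq a (map g s).
Proof.
elim: s a => [|i s IH] [|x a] /=; rewrite ?mulr0 ?addr0 // IH; ring.
Qed.

(* With [ak] the entry of [a] facing [m]: [a0 c + ak m <= a0 m + ak c] because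
   [(ak - a0) (c - m) >= 0]. *)
Lemma dotseq_exchange (a0 : R) a b1 b2 c m :
  size a = (size b1 + (size b2).+1)%N -> all (fun v => a0 <= v) a -> m <= c ->
  a0 * c + dotseq a (b1 ++ m :: b2) <= a0 * m + dotseq a (b1 ++ c :: b2).
Proof.
move=> a_size a_ge mc; rewrite -(cat_take_drop (size b1) a) in a_ge *.
have take_size : size (take (size b1) a) = size b1 by rewrite size_takel // a_size leq_addr.
case Edrop : (drop (size b1) a) => [|ak a'].
  by move: (congr1 size Edrop); rewrite size_drop a_size /=; lia.
rewrite Edrop all_cat /= in a_ge; case/and3P: a_ge => _ a0_ak _.
rewrite !dotseq_cat //=.
have : 0 <= (ak - a0) * (c - m) by rewrite mulr_ge0 ?subr_ge0.
nra.
Qed.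

Lemma dotseq_pull_min (a0 : R) a b m :
  size b = (size a).+1 -> all (fun v => a0 <= v) a ->
  m \in b -> {in b, forall x, m <= x} ->
  exists2 b', perm_eq b (m :: b') & dotseq (a0 :: a) b <= a0 * m + dotseq a b'.
Proof.
move=> b_size a_ge mb; case/splitPr: mb b_size => [[|c b1] b2] b_size m_min /=.
  by exists b2.
exists (b1 ++ c :: b2).
  by apply/permP => P /=; rewrite !count_cat /=; lia.
apply: dotseq_exchange => //; last by apply: m_min; rewrite mem_head.
by move: b_size; rewrite /= size_cat /=; lia.
Qed.

Lemma dotseq_le_sorted a b b' :
  sorted <=%R a -> sorted <=%R b' -> perm_eq b b' -> size a = size b ->
  dotseq a b <= dotseq a b'.
Proof.
elim: a b b' => [|a0 a IH] b [|m t] a_sorted b'_sorted bb' ab_size //=.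
  by move: ab_size; rewrite (perm_size bb').
have mb : m \in b by rewrite (perm_mem bb') mem_head.
have m_min : {in b, forall x, m <= x}.
  move=> x; rewrite (perm_mem bb') inE => /predU1P[-> //|xt].
  exact: (allP (order_path_min le_trans b'_sorted)).
have [b'' bb'' le_b''] := dotseq_pull_min (esym ab_size) (order_path_min le_trans a_sorted) mb m_min.
apply: (le_trans le_b''); rewrite lerD2l IH ?(path_sorted a_sorted) ?(path_sorted b'_sorted) //.
  by rewrite -(perm_cons m) -(permPl bb'').
by move: ab_size; rewrite (perm_size bb'') => -[].
Qed.

End SeqDot.

Section SortedL1.
Set Implicit Arguments.
Unset Strict Implicit.
Variables (R : realType) (p : nat).
Implicit Types (lam u v x y z : 'rV[R]_p).

Definition vdot u v : R := \sum_i u 0 i * v 0 i.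

Lemma vdot_ge0 v : 0 <= vdot v v.
Proof. by apply: sumr_ge0 => i _; rewrite -expr2 sqr_ge0. Qed.

Lemma norm2E v : norm2 v = Num.sqrt (vdot v v).
Proof. by congr Num.sqrt; apply: eq_bigr => i _; rewrite expr2. Qed.

Lemma norm2_sqr v : norm2 v ^+ 2 = vdot v v.
Proof. by rewrite norm2E sqr_sqrtr ?vdot_ge0. Qed.

Lemma norm2_ge0 v : 0 <= norm2 v.
Proof. exact: sqrtr_ge0. Qed.

Lemma norm2N v : norm2 (- v) = norm2 v.
Proof. by rewrite !norm2E; congr Num.sqrt; apply: eq_bigr => i _; rewrite mxE mulrNN. Qed.

Lemma vdotBB u v : vdot (u - v) (u - v) = vdot u u + vdot v v - 2 * vdot u v.
Proof.
rewrite /vdot mulr_sumr -big_split -sumrB /=.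
by apply: eq_bigr => i _; rewrite !mxE; ring.
Qed.

Lemma vdot_le_AMGM u v : vdot u v <= norm2 u ^+ 2 + norm2 v ^+ 2 / 4.
Proof.
rewrite !norm2_sqr /vdot mulr_suml -big_split /=; apply: ler_sum => i _.
have := sqr_ge0 (u 0 i - v 0 i / 2); nra.
Qed.

Definition lam_seq lam := [seq lam 0 i | i <- enum 'I_p].

Definition abs_order x := sort (relpre (fun i => `|x 0 i|) <=%R) (enum 'I_p).

Definition abs_sorted_row x : 'rV[R]_p := \row_i nth 0 (abs_sorted x) i.

Lemma abs_sortedE x : abs_sorted x = [seq `|x 0 i| | i <- abs_order x].
Proof. by rewrite /abs_sorted sort_map. Qed.

Lemma perm_abs_order x : perm_eq (abs_order x) (enum 'I_p).
Proof. by rewrite perm_sort. Qed.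

Lemma size_abs_sorted x : size (abs_sorted x) = p.
Proof. by rewrite size_sort size_map size_enum_ord. Qed.

Lemma sorted_abs_sorted x : sorted <=%R (abs_sorted x).
Proof. exact/sort_sorted/le_total. Qed.

Lemma perm_abs_sorted x (s : seq 'I_p) :
  perm_eq s (enum 'I_p) -> perm_eq [seq `|x 0 i| | i <- s] (abs_sorted x).
Proof.
by move=> s_enum; rewrite perm_sym perm_sort perm_sym; apply: perm_map.
Qed.

Lemma dotseq_le_abs_sorted (a : seq R) x (s : seq 'I_p) :
  sorted <=%R a -> size a = p -> perm_eq s (enum 'I_p) ->
  dotseq a [seq `|x 0 i| | i <- s] <= dotseq a (abs_sorted x).
Proof.
move=> a_sorted a_size s_enum.
rewrite dotseq_le_sorted ?sorted_abs_sorted ?perm_abs_sorted //.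
by rewrite size_map (perm_size s_enum) size_enum_ord.
Qed.

Lemma vdot_abs_sorted_row x z :
  vdot (abs_sorted_row x) (abs_sorted_row z) = dotseq (abs_sorted x) (abs_sorted z).
Proof.
rewrite (@dotseq_sum _ p) ?size_abs_sorted //.
by apply: eq_bigr => i _; rewrite !mxE.
Qed.

Lemma vdot_abs_sorted_row_id x : vdot (abs_sorted_row x) (abs_sorted_row x) = vdot x x.
Proof.
rewrite vdot_abs_sorted_row abs_sortedE dotseq_map.
rewrite (perm_big _ (perm_abs_order x)) big_enum /=.
by apply: eq_bigr => i _; rewrite -normrM -expr2 ger0_norm ?sqr_ge0 // expr2.
Qed.

Lemma vdot_le_abs_sorted_row x z : vdot x z <= vdot (abs_sorted_row x) (abs_sorted_row z).
Proof.
rewrite vdot_abs_sorted_row.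
have := dotseq_le_abs_sorted z (sorted_abs_sorted x) (size_abs_sorted x) (perm_abs_order x).
apply: le_trans; rewrite abs_sortedE dotseq_map (perm_big _ (perm_abs_order x)) big_enum /=.
by apply: ler_sum => i _; rewrite -normrM ler_norm.
Qed.

Lemma norm2_abs_sorted_rowB x z : norm2 (abs_sorted_row x - abs_sorted_row z) <= norm2 (x - z).
Proof.
rewrite !norm2E ler_sqrt ?vdot_ge0 // !vdotBB !vdot_abs_sorted_row_id.
by rewrite lerD2l lerN2 ler_pM2l // vdot_le_abs_sorted_row.
Qed.

Lemma sl1E lam x : sl1 lam x = vdot lam (abs_sorted_row x).
Proof. by apply: eq_bigr => i _; rewrite mxE. Qed.

Lemma sl1_dotseq lam x : sl1 lam x = dotseq (lam_seq lam) (abs_sorted x).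
Proof.
rewrite (@dotseq_sum _ p) ?size_abs_sorted ?size_map ?size_enum_ord //.
  by apply: eq_bigr => i _; rewrite (nth_map i) ?nth_ord_enum ?size_enum_ord.
by rewrite -enumT size_enum_ord.
Qed.

Lemma sorted_lam_seq lam : admissible_lambda lam -> sorted <=%R (lam_seq lam).
Proof.
move=> [_ lam_mono]; rewrite sorted_map.
apply: (@sub_sorted _ (relpre val ltn)); first by move=> i j /ltnW /lam_mono.
by rewrite -sorted_map val_enum_ord iota_ltn_sorted.
Qed.

Lemma lam_seq_ge0 lam : admissible_lambda lam -> all (fun r => 0 <= r) (lam_seq lam).
Proof. by move=> [lam_ge0 _]; apply/allP => r /mapP[i _ ->]. Qed.

(* The sorted-L1 norm is the largest of the sums [sum_k lam_k |x_(s k)|] over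
   orderings [s] of the coordinates, a maximum of convex functions. *)
Lemma sl1_convex lam x z t : admissible_lambda lam -> 0 <= t -> t <= 1 ->
  sl1 lam ((1 - t) *: x + t *: z) <= (1 - t) * sl1 lam x + t * sl1 lam z.
Proof.
move=> lam_adm t_ge0 t_le1; set w := _ + _.
have lam_sorted := sorted_lam_seq lam_adm.
have lam_size : size (lam_seq lam) = p by rewrite size_map size_enum_ord.
have w_le i : `|w 0 i| <= (1 - t) * `|x 0 i| + t * `|z 0 i|.
  rewrite !mxE; apply: le_trans (ler_normD _ _) _.
  by rewrite !normrM ger0_norm ?subr_ge0 // (ger0_norm t_ge0).
rewrite !sl1_dotseq [abs_sorted w]abs_sortedE.
apply: le_trans (ler_dotseq_map (abs_order w) (lam_seq_ge0 lam_adm) w_le) _.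
rewrite dotseq_map_comb lerD // ler_wpM2l ?subr_ge0 //;
  exact: dotseq_le_abs_sorted (perm_abs_order w).
Qed.

Lemma norm2_sqr_comb y x z t :
  norm2 (y - ((1 - t) *: x + t *: z)) ^+ 2 =
  norm2 (y - x) ^+ 2 - 2 * t * vdot (y - x) (z - x) + t ^+ 2 * norm2 (z - x) ^+ 2.
Proof.
rewrite !norm2_sqr /vdot !mulr_sumr -sumrB -big_split /=.
by apply: eq_bigr => i _; rewrite !mxE; ring.
Qed.

(* Moving from [x] to [(1 - t) x + t z] changes the objective by at most
   [t (J z - J x - <y - x, z - x>) + t^2 |z - x|^2 / 2], which must stay
   nonnegative for all [t] in (0, 1]. *)
Lemma prox_variational_ineq lam y x z : admissible_lambda lam -> is_prox lam y x ->
  vdot (y - x) (z - x) <= sl1 lam z - sl1 lam x.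
Proof.
move=> lam_adm x_min; rewrite -subr_ge0.
apply: (@ge0_of_quadratic_ge0 _ _ (norm2 (z - x) ^+ 2 / 2)) => t /andP[/ltW t_ge0 t_le1].
have := x_min ((1 - t) *: x + t *: z).
have := sl1_convex x z lam_adm t_ge0 t_le1.
rewrite /prox_obj norm2_sqr_comb; lra.
Qed.

End SortedL1.

Lemma le_twice_sum_of_sqr_le (R : realFieldType) (d a b : R) :
  0 <= d -> 0 <= a -> 0 <= b -> d ^+ 2 <= 2 * (a ^+ 2 + b ^+ 2) -> d <= 2 * (a + b).
Proof. nra. Qed.

Theorem lemma19 (R : realType) (p : nat) (y1 y2 lam1 lam2 x1 x2 : 'rV[R]_p) :
  admissible_lambda lam1 -> admissible_lambda lam2 ->
  is_prox lam1 y1 x1 -> is_prox lam2 y2 x2 ->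
  norm2 (x1 - x2) <= 2 * (norm2 (lam1 - lam2) + norm2 (y1 - y2)).
Proof.
move=> adm1 adm2 prox1 prox2.
set s := abs_sorted_row x2 - abs_sorted_row x1.
have vi_sum : vdot (x1 - x2) (x1 - x2) - vdot (y1 - y2) (x1 - x2) <= vdot (lam1 - lam2) s.
  have -> : vdot (x1 - x2) (x1 - x2) - vdot (y1 - y2) (x1 - x2) =
            vdot (y1 - x1) (x2 - x1) + vdot (y2 - x2) (x1 - x2).
    by rewrite /vdot -sumrB -big_split /=; apply: eq_bigr => i _; rewrite !mxE; ring.
  have -> : vdot (lam1 - lam2) s =
            sl1 lam1 x2 - sl1 lam1 x1 + (sl1 lam2 x1 - sl1 lam2 x2).
    by rewrite !sl1E /vdot -!sumrB -big_split /=; apply: eq_bigr => i _; rewrite !mxE; ring.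
  exact: lerD (prox_variational_ineq x2 adm1 prox1) (prox_variational_ineq x1 adm2 prox2).
have s_le : norm2 s <= norm2 (x1 - x2).
  by rewrite -[x1 - x2]opprB norm2N norm2_abs_sorted_rowB.
have := vdot_le_AMGM (y1 - y2) (x1 - x2); have := vdot_le_AMGM (lam1 - lam2) s.
move: vi_sum; rewrite -norm2_sqr => vi_sum am_lam am_y.
apply: le_twice_sum_of_sqr_le; rewrite ?norm2_ge0 //.
have := norm2_ge0 s; nra.
Qed.
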